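(* Let $[\lambda]$ be a nilpotent critical point of $F_m:\mathcal A_m\to\mathbb R$ and let $\mathcal S\subset\Gamma(\lambda)$ be a subalgebra such that $(\Phi^*,\Psi^* )\in\mathcal S$ for every $(\Phi,\Psi)\in\mathcal S$. Then $\mathcal S$ is a semisimple associative algebra.
   Context: $\lambda:\mathbb C^m\times\mathbb C^m\to\mathbb C^m$ is an associative algebra, nilpotent (i.e. $\lambda$-products of some fixed length $k$ all vanish), and $\mathbb C^m$ has its standard Hermitian inner product, $^*$ denoting adjoint; $[\lambda]$ is a critical point of $F_m$, meaning $\mathrm M_\lambda=c_\lambda I+D_\lambda$ with $c_\lambda\in\mathbb R$ and $D_\lambda$ a derivation, where $\mathrm M_\lambda=2\sum_i L^\lambda_{X_i}(L^\lambda_{X_i})^*-2\sum_i (L^\lambda_{X_i})^*L^\lambda_{X_i}-2\sum_i (R^\lambda_{X_i})^*R^\lambda_{X_i}$, $L^\lambda_XY=\lambda(X,Y)$, $R^\lambda_XY=\lambda(Y,X)$, $\{X_i\}$ orthonormal. Define $L(\lambda)=\{\Phi\in\mathrm{End}(\mathbb C^m):\Phi(\lambda(X,Y))=\lambda(\Phi X,Y)\ \forall X,Y\}$, $R(\lambda)=\{\Psi\in\mathrm{End}(\mathbb C^m):\Psi(\lambda(X,Y))=\lambda(X,\Psi Y)\ \forall X,Y\}$, $\Gamma_l=\{\Phi\in L(\lambda):[\Phi,\Psi]=0\ \forall\Psi\in R(\lambda)\}$, $\Gamma_r=\{\Psi\in R(\lambda):[\Phi,\Psi]=0\ \forall\Phi\in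 L(\lambda)\}$, and $\Gamma(\lambda)=\{(\Phi,\Psi)\in\Gamma_l\times\Gamma_r:\lambda(X,\Phi Y)=\lambda(\Psi X,Y)\ \forall X,Y\}$, an associative algebra under $(\Phi_1,\Psi_1)(\Phi_2,\Psi_2)=(\Phi_1\Phi_2,\Psi_2\Psi_1)$. Semisimple means the radical (largest nilpotent ideal) is zero. *)

From HB Require Import structures.
From mathcomp Require Import all_boot all_order all_algebra.
From mathcomp Require Import reals complex.
Set Implicit Arguments. Unset Strict Implicit. Unset Printing Implicit Defensive.
Import Order.TTheory GRing.Theory Num.Theory.
Local Open Scope ring_scope.

Section Defs.
Variables (R : realType) (m : nat).
Local Notation C := R[i].
Local Notation V := 'cV[C]_m.
Local Notation End := 'M[C]_m.    (* endomorphisms, acting by A *m x *)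

Definition bilinear_prod (lam : V -> V -> V) : Prop :=
  (forall (a : C) (x y z : V), lam (a *: x + y) z = a *: lam x z + lam y z) /\
  (forall (a : C) (x y z : V), lam x (a *: y + z) = a *: lam x y + lam x z).

Definition assoc_prod (lam : V -> V -> V) : Prop :=
  forall x y z : V, lam (lam x y) z = lam x (lam y z).

Fixpoint iprod (lam : V -> V -> V) (x0 : V) (s : seq V) : V :=
  if s is y :: s' then iprod lam (lam x0 y) s' else x0.

Definition nilpotent_prod (lam : V -> V -> V) : Prop :=
  exists k : nat, forall (x0 : V) (s : seq V), size s = k -> iprod lam x0 s = 0.

Definition mx_of (f : V -> V) : End := \matrix_(i, j) (f (delta_mx j 0)) i 0.

(* adjoint w.r.t. the standard Hermitian inner product <u,v> = sum_i u_i (v_i)^* *)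
Definition adj (A : End) : End := (map_mx Num.conj A)^T.

Definition ebasis (i : 'I_m) : V := delta_mx i 0.

Definition Lop (lam : V -> V -> V) (X : V) : End := mx_of (lam X).
Definition Rop (lam : V -> V -> V) (X : V) : End := mx_of (fun Y => lam Y X).

(* M_lambda = 2 sum L L^* - 2 sum L^* L - 2 sum R^* R  (composition = matrix product) *)
Definition Mlam (lam : V -> V -> V) : End :=
  2%:R *: \sum_(i < m) (Lop lam (ebasis i) *m adj (Lop lam (ebasis i)))
  - 2%:R *: \sum_(i < m) (adj (Lop lam (ebasis i)) *m Lop lam (ebasis i))
  - 2%:R *: \sum_(i < m) (adj (Rop lam (ebasis i)) *m Rop lam (ebasis i)).

Definition derivation (lam : V -> V -> V) (D : End) : Prop :=
  forall x y : V, D *m lam x y = lam (D *m x) y + lam x (D *m y).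

(* [lam] is a critical point of F_m: M_lam = c I + D, c real, D a derivation *)
Definition critical_point (lam : V -> V -> V) : Prop :=
  exists (c : R) (D : End), derivation lam D /\ Mlam lam = ((c%:C)%C)%:M + D.

Definition Lset (lam : V -> V -> V) (Phi : End) : Prop :=
  forall x y : V, Phi *m lam x y = lam (Phi *m x) y.
Definition Rset (lam : V -> V -> V) (Psi : End) : Prop :=
  forall x y : V, Psi *m lam x y = lam x (Psi *m y).

Definition Gamma_l (lam : V -> V -> V) (Phi : End) : Prop :=
  Lset lam Phi /\ forall Psi, Rset lam Psi -> Phi *m Psi = Psi *m Phi.
Definition Gamma_r (lam : V -> V -> V) (Psi : End) : Prop :=
  Rset lam Psi /\ forall Phi, Lset lam Phi -> Phi *m Psi = Psi *m Phi.

Definition Gamma (lam : V -> V -> V) (p : End * End) : Prop :=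
  Gamma_l lam p.1 /\ Gamma_r lam p.2 /\
  forall x y : V, lam x (p.1 *m y) = lam (p.2 *m x) y.

Definition pmul (p q : End * End) : End * End := (p.1 *m q.1, q.2 *m p.2).
Definition padd (p q : End * End) : End * End := (p.1 + q.1, p.2 + q.2).
Definition pscale (a : C) (p : End * End) : End * End := (a *: p.1, a *: p.2).
Definition pzero : End * End := (0, 0).

Definition subalgebra (S : End * End -> Prop) : Prop :=
  S pzero /\
  (forall p q, S p -> S q -> S (padd p q)) /\
  (forall a p, S p -> S (pscale a p)) /\
  (forall p q, S p -> S q -> S (pmul p q)).

Definition ideal_of (S I : End * End -> Prop) : Prop :=
  (forall p, I p -> S p) /\ subalgebra I /\
  (forall s p, S s -> I p -> I (pmul s p) /\ I (pmul p s)).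

Fixpoint piprod (p0 : End * End) (s : seq (End * End)) : End * End :=
  if s is q :: s' then piprod (pmul p0 q) s' else p0.

Definition nilpotent_set (I : End * End -> Prop) : Prop :=
  exists k : nat, forall p0 (s : seq (End * End)),
    I p0 -> (forall q, q \in s -> I q) -> size s = k -> piprod p0 s = pzero.

(* semisimple: the radical (largest nilpotent ideal) is zero, i.e. every
   nilpotent ideal of S is the zero ideal *)
Definition semisimple (S : End * End -> Prop) : Prop :=
  forall I, ideal_of S I -> nilpotent_set I -> forall p, I p -> p = pzero.
End Defs.

(* A nilpotent ideal I of S contains, with every p = (P, Q), the product
   p (adj P, adj Q) = (P adj P, adj Q Q), because S is closed under adjoints.
   Both components are Hermitian and nilpotent.  A nilpotent Hermitian
   matrix H vanishes: H^2 = H adj H, and M adj M = 0 forces M = 0 since the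
   diagonal of M adj M holds the squared row norms of M.  Hence P adj P = 0
   and adj Q Q = 0, so P = Q = 0. *)
From HB Require Import structures.
From mathcomp Require Import all_boot all_order all_algebra.
From mathcomp Require Import reals complex.
Set Implicit Arguments. Unset Strict Implicit. Unset Printing Implicit Defensive.
Import Order.TTheory GRing.Theory Num.Theory.
Local Open Scope ring_scope.

Section Adjoint.
Variable R : realType.
Local Notation C := R[i].

Lemma adjM n (A B : 'M[C]_n) : adj (A *m B) = adj B *m adj A.
Proof. by rewrite /adj map_mxM trmx_mul. Qed.

Lemma adjK n : involutive (@adj R n).
Proof. by move=> A; apply/matrixP=> i j; rewrite !mxE conjCK. Qed.

Lemma adj0 n : adj (0 : 'M[C]_n) = 0.
Proof. by rewrite /adj map_mx0 trmx0. Qed.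

Lemma adj1 n : adj (1 : 'M[C]_n.+1) = 1.
Proof. by apply/matrixP=> i j; rewrite !mxE conjC_nat eq_sym. Qed.

Lemma adjX n (H : 'M[C]_n.+1) k : adj (H ^+ k) = adj H ^+ k.
Proof.
elim: k => [|k IH]; first by rewrite !expr0 adj1.
by rewrite exprS -mulmxE adjM IH mulmxE exprSr.
Qed.

Lemma mulmx_adj_eq0 n (M : 'M[C]_n) : M *m adj M = 0 -> M = 0.
Proof.
move=> MMadj0; apply/matrixP=> i j.
have := congr1 (fun A : 'M_n => A i i) MMadj0; rewrite !mxE.
under eq_bigr do rewrite !mxE -normCK.
move=> /psumr_eq0P sum0.
have /eqP := sum0 (fun k _ => exprn_ge0 2 (normr_ge0 _)) j isT.
by rewrite expf_eq0 /= normr_eq0 => /eqP.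
Qed.

Lemma adj_mulmx_eq0 n (M : 'M[C]_n) : adj M *m M = 0 -> M = 0.
Proof.
by move=> h; rewrite -[M]adjK (@mulmx_adj_eq0 _ (adj M)) ?adjK ?adj0.
Qed.

Lemma hermitian_expS_eq0 n (H : 'M[C]_n.+1) k :
  adj H = H -> H ^+ k.+2 = 0 -> H ^+ k.+1 = 0.
Proof.
move=> hermH Hk2; apply: mulmx_adj_eq0.
have le_k2 : (k.+2 <= k.+1 + k.+1)%N by rewrite addnS ltnS leq_addr.
by rewrite adjX hermH mulmxE -exprD -(subnKC le_k2) exprD Hk2 mul0r.
Qed.

Lemma hermitian_nilpotent_eq0 n (H : 'M[C]_n.+1) k :
  adj H = H -> H ^+ k = 0 -> H = 0.
Proof.
move=> hermH; elim: k => [|k IH Hk]; first by rewrite expr0 => /eqP; rewrite oner_eq0.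
case: k IH Hk => [_|k IH /(hermitian_expS_eq0 hermH)//]; by rewrite expr1.
Qed.

End Adjoint.

Lemma piprod_nseq (R : realType) n (X Y A B : 'M[R[i]]_n.+1) k :
  piprod (X, Y) (nseq k (A, B)) = (X * A ^+ k, B ^+ k * Y).
Proof.
elim: k X Y => [|k IH] X Y /=; first by rewrite !expr0 mulr1 mul1r.
by rewrite /pmul /= IH !mulmxE exprS exprSr !mulrA.
Qed.

Lemma nilpotent_set_exp (R : realType) n (I : 'M[R[i]]_n.+1 * 'M[R[i]]_n.+1 -> Prop) :
  nilpotent_set I -> exists k, forall A B, I (A, B) -> A ^+ k = 0 /\ B ^+ k = 0.
Proof.
move=> [k nilI]; exists k.+1 => A B IAB.
have IAB_all q : q \in nseq k (A, B) -> I q by move=> /nseqP[-> _].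
have := nilI _ _ IAB IAB_all (size_nseq _ _).
by rewrite piprod_nseq -exprSr -exprS => -[].
Qed.

Theorem lemma4p11 (R : realType) (m : nat) (lam : 'cV[R[i]]_m -> 'cV[R[i]]_m -> 'cV[R[i]]_m)
    (S : 'M[R[i]]_m * 'M[R[i]]_m -> Prop) :
  bilinear_prod lam -> assoc_prod lam -> (exists x y, lam x y <> 0) ->
  nilpotent_prod lam -> critical_point lam ->
  subalgebra S -> (forall p, S p -> Gamma lam p) ->
  (forall p, S p -> S (adj p.1, adj p.2)) ->
  semisimple S.
Proof.
move=> _ _ _ _ _ _ _ S_adj I [IS [_ I_ideal]] nilI [P Q] Ipq.
case: m lam S S_adj I IS I_ideal nilI P Q Ipq => [|n] _ S S_adj I IS I_ideal nilI P Q Ipq.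
  by rewrite /pzero [P]flatmx0 [Q]flatmx0.
have [k nilpk] := nilpotent_set_exp nilI.
have [_ I_pp'] := I_ideal _ _ (S_adj _ (IS _ Ipq)) Ipq.
have [PP'k Q'Qk] := nilpk _ _ I_pp'.
have PP'herm : adj (P *m adj P) = P *m adj P by rewrite adjM adjK.
have Q'Qherm : adj (adj Q *m Q) = adj Q *m Q by rewrite adjM adjK.
have /mulmx_adj_eq0 -> := hermitian_nilpotent_eq0 PP'herm PP'k.
by have /adj_mulmx_eq0 -> := hermitian_nilpotent_eq0 Q'Qherm Q'Qk.
Qed.
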